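(* Let $M$ and $k$ be positive integers with $M\geq k\geq 4$, and let $G$ be a finite simple graph with maximum degree $\Delta(G)\leq M$. Then: (1) if $\mathrm{mad}(G)<\frac{12}{5}$, then $\chi^l_k(G)\leq\left\lceil\frac{M}{k-1}\right\rceil+1$; (2) if $\mathrm{mad}(G)<\frac{8}{3}$, then $\chi^l_k(G)\leq\left\lceil\frac{M}{k-1}\right\rceil+2$; (3) if $\mathrm{mad}(G)<3$, then $\chi^l_k(G)\leq\left\lceil\frac{M}{k-1}\right\rceil+3$.
   Context: All graphs are finite, simple and undirected. The maximum average degree of $G$ is $\mathrm{mad}(G)=\max\{2|E(H)|/|V(H)| : H\subseteq G\}$. A $k$-forested coloring of $G$ is a proper vertex coloring such that, for any two color classes, the subgraph induced by the union of these two classes is a forest of maximum degree less than $k$. If $L$ assigns to each vertex $v$ a list $L(v)$ of colors, $G$ is $k$-forested $L$-colorable if it has a $k$-forested coloring in which each vertex $v$ receives a color from $L(v)$; $G$ is $k$-forested $q$-choosable if it is $k$-forested $L$-colorable for every list assignment $L$ with $|L(v)|=q$ for all $v$. The $k$-forested choice number $\chi^l_k(G)$ is the smallest $q$ such that $G$ is $k$-forested $q$-choosable. *)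

From mathcomp Require Import all_boot all_order all_algebra.
Set Implicit Arguments. Unset Strict Implicit. Unset Printing Implicit Defensive.
Import Order.TTheory GRing.Theory Num.Theory.

Definition simple_graph (T : finType) (e : rel T) : Prop :=
  symmetric e /\ irreflexive e.

Definition nbhd (T : finType) (e : rel T) (v : T) : {set T} := [set u | e v u].
Definition max_degree_le (T : finType) (e : rel T) (M : nat) : Prop :=
  forall v : T, #|nbhd e v| <= M.

(* Each edge of H corresponds to exactly two arcs, so #|F| = 2|E(H)|. *)
Definition is_subgraph (T : finType) (e : rel T) (S : {set T}) (F : {set T * T}) : bool :=
  [forall p : T * T, (p \in F) ==>
     [&& e p.1 p.2, p.1 \in S, p.2 \in S & (p.2, p.1) \in F]].

(* 2|E(H)|/|V(H)| for a subgraph H = (S,F); 0 when H is empty (harmless). *)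
Definition avg_deg (T : finType) (e : rel T) (H : {set T} * {set T * T}) : rat :=
  if is_subgraph e H.1 H.2 && (H.1 != set0)
  then (#|H.2|%:R / #|H.1|%:R)%R else 0%R.

Definition mad (T : finType) (e : rel T) : rat :=
  (\big[Num.max/0%R]_(H : {set T} * {set T * T}) avg_deg e H)%R.

Definition induces_forest (T : finType) (e : rel T) (A : {set T}) : Prop :=
  forall s : seq T, uniq s -> 2 < size s -> all (fun x => x \in A) s -> ~~ cycle e s.

Definition induced_maxdeg_lt (T : finType) (e : rel T) (A : {set T}) (k : nat) : Prop :=
  forall v, v \in A -> #|nbhd e v :&: A| < k.

Definition forested_coloring (T : finType) (e : rel T) (k : nat) (c : T -> nat) : Prop :=
  (forall u v, e u v -> c u != c v) /\
  (forall a b : nat, a != b ->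
     let A := [set v | (c v == a) || (c v == b)] in
     induces_forest e A /\ induced_maxdeg_lt e A k).

Definition forested_choosable (T : finType) (e : rel T) (k q : nat) : Prop :=
  forall L : T -> seq nat, (forall v, uniq (L v) /\ size (L v) = q) ->
    exists c : T -> nat, forested_coloring e k c /\ forall v, c v \in L v.

Definition forested_choice_number_le (T : finType) (e : rel T) (k n : nat) : Prop :=
  exists2 q, q <= n & forested_choosable e k q.

Definition ceil_div (m d : nat) : nat := (m + d.-1) %/ d.

(* By discharging, every vertex set of a graph of
   small maximum average degree contains a reducible configuration: a vertex
   of degree at most 1, a 2-vertex next to a vertex of small degree, or a
   vertex most of whose neighbours are 2-vertices. A k-forested L-colouring
   of the rest extends to the configuration: a new vertex v may take colour a
   unless a occurs next to v, a already occurs k - 1 times around some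
   neighbour u of v (a saturated colour of u; as deg u <= M - 1 there are at
   most ceil (M / (k - 1)) - 1 of them), or a closes a bicoloured cycle
   through v. Counting the forbidden colours against the list sizes
   ceil (M / (k - 1)) + 1, + 2, + 3 settles the three cases. *)

From mathcomp Require Import all_boot all_order all_algebra.
From mathcomp Require Import zify.
Import Order.TTheory GRing.Theory Num.Theory.
Set Implicit Arguments. Unset Strict Implicit. Unset Printing Implicit Defensive.

Section ListColoring.
Variables (T : finType) (e : rel T) (k : nat).
Hypotheses (esym : symmetric e) (eirr : irreflexive e) (k_gt3 : 3 < k).
Variable L : T -> seq nat.

Definition deg_in (S : {set T}) x := #|nbhd e x :&: S|.

Definition bicolored (S : {set T}) (c : T -> nat) a b :=
  [set v in S | (c v == a) || (c v == b)].

Definition forested_on (S : {set T}) (c : T -> nat) : Prop :=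
  [/\ forall v, v \in S -> c v \in L v,
      forall u v, u \in S -> v \in S -> e u v -> c u != c v &
      forall a b, a != b -> induces_forest e (bicolored S c a b) /\
                            induced_maxdeg_lt e (bicolored S c a b) k].

Definition recolor (c : T -> nat) v a := fun z => if z == v then a else c z.

Definition nbr_count (S : {set T}) (c : T -> nat) u a :=
  #|[set y in nbhd e u :&: S | c y == a]|.

Definition bicolored_path (S : {set T}) (c : T -> nat) a u1 u2 (p : seq T) :=
  [/\ uniq (u1 :: p), path e u1 p, last u1 p = u2 &
      all (fun y => (y \in S) && ((c y == a) || (c y == c u1))) p].

Lemma in_nbhd x y : (y \in nbhd e x) = e x y.
Proof. by rewrite inE. Qed.

Lemma recolor_at c v a : recolor c v a v = a.
Proof. by rewrite /recolor eqxx. Qed.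

Lemma recolor_notin (S : {set T}) c v a z : v \notin S -> z \in S -> recolor c v a z = c z.
Proof. by move=> vS zS; rewrite /recolor; case: eqP => // zv; move: zS; rewrite zv (negbTE vS). Qed.

Lemma bicolor_other (x y a b : nat) : (a == x) || (a == y) -> (b == x) || (b == y) ->
  b != a -> b = (if a == x then y else x).
Proof. by case/orP=> /eqP-> /orP[]/eqP->; rewrite ?eqxx // eq_sym; case: eqP. Qed.

Lemma eq_of_bicolor (x y p q r : nat) : (p == x) || (p == y) -> (q == x) || (q == y) ->
  (r == x) || (r == y) -> p != q -> p != r -> q == r.
Proof. by do 3 case/orP=> /eqP->; rewrite ?eqxx. Qed.

Lemma cycle_rot_at (s : seq T) v : uniq s -> 2 < size s -> cycle e s -> v \in s ->
  exists u1 p, [/\ {subset v :: u1 :: p <= s}, uniq (v :: u1 :: p),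
                   cycle e (v :: u1 :: p) & u1 != last u1 p].
Proof.
move=> us ss cs vs; case: (rot_to vs) => i s' Hrot.
have us' : uniq (v :: s') by rewrite -Hrot rot_uniq.
have cs' : cycle e (v :: s') by rewrite -Hrot rot_cycle.
have ss' : 2 < size (v :: s') by rewrite -Hrot size_rot.
have sub : {subset v :: s' <= s} by move=> z; rewrite -Hrot mem_rot.
case: s' {Hrot} us' cs' ss' sub => [//|u1 p] us' cs' ss' sub.
exists u1, p; split => //.
move: ss' (andP us').2; case: (p) => [//|y0 p'] _ /=.
rewrite !inE negb_or => /andP[/andP[Hn Hn'] _].
apply/eqP=> E; move: (mem_last y0 p'); rewrite -E inE (negbTE Hn).
by rewrite (negbTE Hn').
Qed.

Section Extension.
Variables (S : {set T}) (c : T -> nat) (v : T) (a : nat).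
Hypotheses (vS : v \notin S) (cS : forested_on S c).
Hypothesis nbr_col_neq : forall u, u \in S -> e v u -> c u != a.

(* A cycle of a new bicoloured subgraph passes through v, and its neighbours
   u1, u2 on the cycle get the same colour: the rest of the cycle is a
   forbidden bicoloured path. *)
Lemma extend_forest :
  (forall u1 u2 p, u1 \in S -> u2 \in S -> e v u1 -> e v u2 -> u1 != u2 ->
     c u1 = c u2 -> ~ bicolored_path S c a u1 u2 p) ->
  forall x y, x != y -> induces_forest e (bicolored (v |: S) (recolor c v a) x y).
Proof.
move=> no_path x y xy; have [_ _ cF] := cS; have [oF _] := cF x y xy.
have cvS z : z \in S -> recolor c v a z = c z by apply: recolor_notin.
move=> s us ss alls; apply/negP => cs.
case vs: (v \in s); last first.
  apply: (negP (oF s us ss _)) => //; apply/allP => z zs.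
  have := allP alls z zs; rewrite !inE.
  case/andP => /orP[/eqP zv|zS]; first by rewrite -zv zs in vs.
  by rewrite cvS // => ->; rewrite zS.
have [u1 [p [sub U cyc u12]]] := cycle_rot_at us ss cs vs.
move: cyc; rewrite /= rcons_path => /andP[evu1 /andP[pp elast]].
set u2 := last u1 p in elast u12.
have bic z : z \in v :: u1 :: p -> z \in bicolored (v |: S) (recolor c v a) x y.
  by move=> /sub; apply: (allP alls).
have inS z : z \in u1 :: p -> z \in S.
  move=> zin; have := bic z; rewrite inE zin orbT => /(_ isT).
  rewrite !inE; case/andP=> /orP[/eqP zv|//].
  by move: U; rewrite /= -zv zin.
have u1S : u1 \in S by apply: inS; rewrite inE eqxx.
have u2S : u2 \in S by apply: inS; apply: mem_last.
have colv : (a == x) || (a == y).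
  by have := bic v; rewrite inE eqxx /= => /(_ isT); rewrite !inE eqxx recolor_at.
have colz z : z \in u1 :: p -> (c z == x) || (c z == y).
  move=> zin; have := bic z; rewrite inE zin orbT => /(_ isT).
  by rewrite !inE cvS ?inS // => /andP[].
have other z : z \in S -> e v z -> z \in u1 :: p -> c z = (if a == x then y else x).
  by move=> zS evz zin; apply: bicolor_other colv (colz z zin) (nbr_col_neq zS evz).
have c12 : c u1 = c u2.
  rewrite (other u1) ?inE ?eqxx // (other u2) //; last by apply: mem_last.
  by rewrite esym.
apply: (no_path u1 u2 p u1S u2S evu1 _ u12 c12); first by rewrite esym.
split=> //; first exact: (andP U).2.
apply/allP => z zp.
have zin : z \in u1 :: p by rewrite inE zp orbT.
rewrite inS //= (other u1) ?inE ?eqxx //.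
have := colz z zin; case: (a =P x) => [->|Nax] //.
have -> : a = y by case/orP: colv => /eqP.
by rewrite orbC.
Qed.

Lemma extend_maxdeg :
  (forall u, u \in S -> e v u -> nbr_count S c u a < k.-1) ->
  (forall b, nbr_count S c v b < k) ->
  forall x y, x != y -> induced_maxdeg_lt e (bicolored (v |: S) (recolor c v a) x y) k.
Proof.
move=> nbr_unsat v_unsat x y xy; have [_ cP cF] := cS; have [_ oD] := cF x y xy.
have cvS z : z \in S -> recolor c v a z = c z by apply: recolor_notin.
move=> z; rewrite !inE => /andP[/orP[/eqP zv|zS] colzz].
  subst z; rewrite recolor_at in colzz.
  set b := if a == x then y else x.
  apply: (leq_ltn_trans _ (v_unsat b)); apply: subset_leq_card.
  apply/subsetP => w; rewrite !inE => /andP[evw /andP[/orP[/eqP wv|wS] cw]].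
    by rewrite wv eirr in evw.
  rewrite evw wS /=; rewrite cvS // in cw.
  by rewrite /b -(bicolor_other colzz cw (nbr_col_neq wS evw)).
rewrite cvS // in colzz.
case H: (e z v && ((a == x) || (a == y))).
  case/andP: H => ezv colv.
  have evz : e v z by rewrite esym.
  have H1 := nbr_unsat z zS evz.
  apply: (@leq_ltn_trans (#|[set v] :|: [set y0 in nbhd e z :&: S | c y0 == a]|)).
    apply: subset_leq_card; apply/subsetP => w.
    rewrite !inE => /andP[ezw /andP[/orP[->//|wS] cw]].
    rewrite ezw wS /=; apply/orP; right; move: cw; rewrite cvS // => cw.
    exact: (eq_of_bicolor colzz cw colv (cP z w zS wS ezw) (nbr_col_neq zS evz)).
  rewrite cardsU1; have := leq_b1 (v \notin [set y0 in nbhd e z :&: S | c y0 == a]).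
  move: H1; rewrite /nbr_count; lia.
have zA : z \in bicolored S c x y by rewrite inE zS.
apply: (leq_ltn_trans _ (oD z zA)); apply: subset_leq_card.
apply/subsetP => w; rewrite !inE => /andP[ezw /andP[/orP[/eqP wv|wS] cw]].
  by subst w; rewrite recolor_at in cw; rewrite ezw cw in H.
by rewrite ezw wS -(cvS _ wS).
Qed.

Lemma forested_extend :
  a \in L v ->
  (forall u, u \in S -> e v u -> nbr_count S c u a < k.-1) ->
  (forall b, nbr_count S c v b < k) ->
  (forall u1 u2 p, u1 \in S -> u2 \in S -> e v u1 -> e v u2 -> u1 != u2 ->
     c u1 = c u2 -> ~ bicolored_path S c a u1 u2 p) ->
  forested_on (v |: S) (recolor c v a).
Proof.
move=> aL nbr_unsat v_unsat no_path; have [cL cP _] := cS.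
have cvS z : z \in S -> recolor c v a z = c z by apply: recolor_notin.
split.
- move=> z; rewrite in_setU1; case/orP=> [/eqP->|zS]; first by rewrite recolor_at.
  by rewrite cvS //; apply: cL.
- move=> x y; rewrite !in_setU1.
  case/orP=> [/eqP->|xS]; case/orP=> [/eqP->|yS].
  + by rewrite eirr.
  + by move=> evy; rewrite recolor_at cvS // eq_sym nbr_col_neq.
  + by move=> exv; rewrite recolor_at cvS // nbr_col_neq // esym.
  + by move=> exy; rewrite !cvS //; apply: cP.
by move=> x y xy; split; [apply: extend_forest | apply: extend_maxdeg].
Qed.

End Extension.

Lemma bicolored_path_rev (S : {set T}) c a u1 u2 p : u1 \in S -> bicolored_path S c a u1 u2 p ->
  c u1 = c u2 -> exists p', bicolored_path S c a u2 u1 p'.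
Proof.
move=> u1S [U Pa La Al] c12; exists (rev (belast u1 p)); split.
- by rewrite -La -rev_rcons rev_uniq -lastI.
- have H : (fun z => e^~ z) =2 e by move=> x y; exact: esym.
  by rewrite -La rev_path (eq_path H).
- case: p U Pa La Al => [|y p'] /= _ _ La _; first by [].
  by rewrite rev_cons last_rcons.
- rewrite all_rev -c12; apply/allP => z /mem_belast; rewrite inE.
  by case/orP=> [/eqP->|zp]; [rewrite u1S eqxx orbT | apply: (allP Al)].
Qed.

Lemma bicolored_path_head (S : {set T}) c a u1 u2 p :
  (forall x y, x \in S -> y \in S -> e x y -> c x != c y) ->
  u1 \in S -> u1 != u2 -> bicolored_path S c a u1 u2 p ->
  exists2 y, y \in nbhd e u1 :&: S & c y = a.
Proof.
move=> cP u1S u12 [_ Pa La Al].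
case: p Pa La Al => [|y p'] /=; first by move=> _ E; rewrite E eqxx in u12.
case/andP=> ey _ _ /andP[/andP[yS cy] _].
exists y; first by rewrite !inE ey yS.
have := cP _ _ u1S yS ey.
by case/orP: cy => /eqP -> //; rewrite eqxx.
Qed.

Definition nbr_colors (S : {set T}) (c : T -> nat) u : seq nat :=
  [seq c y | y <- enum (nbhd e u :&: S)].

(* The colours a that already occur k - 1 times around u: giving a to one
   more neighbour of u would create a vertex of degree k in a bicoloured
   subgraph. *)
Definition sat_colors (S : {set T}) (c : T -> nat) u : seq nat :=
  [seq a <- undup (nbr_colors S c u) | k.-1 <= nbr_count S c u a].

Lemma size_nbr_colors S c u : size (nbr_colors S c u) = deg_in S u.
Proof. by rewrite size_map -cardE. Qed.

Lemma mem_nbr_colors S c u y : y \in nbhd e u :&: S -> c y \in nbr_colors S c u.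
Proof. by move=> yN; apply: map_f; rewrite mem_enum. Qed.

Lemma nbr_count_le_deg S c u a : nbr_count S c u a <= deg_in S u.
Proof. by apply: subset_leq_card; apply/subsetP => y; rewrite inE => /andP[]. Qed.

Lemma nbr_count_lt S c u a : a \notin sat_colors S c u -> nbr_count S c u a < k.-1.
Proof.
rewrite mem_filter mem_undup negb_and -ltnNge => /orP[//|acol].
suff -> : nbr_count S c u a = 0 by lia.
apply/eqP; rewrite cards_eq0; apply/eqP/setP => y; rewrite !inE.
apply/negbTE; apply/negP => /andP[yN /eqP cy]; move: acol.
by rewrite -cy (@mem_nbr_colors S c u y) // !inE.
Qed.

Lemma card_nbrs_colored_in S c u (s : seq nat) : uniq s ->
  (forall a, a \in s -> k.-1 <= nbr_count S c u a) ->
  size s * k.-1 <= #|[set y in nbhd e u :&: S | c y \in s]|.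
Proof.
elim: s => [|a s IH] /=; first by rewrite mul0n.
case/andP=> as_ us H.
have -> : [set y in nbhd e u :&: S | c y \in a :: s] =
   [set y in nbhd e u :&: S | c y == a] :|: [set y in nbhd e u :&: S | c y \in s].
  by apply/setP => y; rewrite !inE; case: (e u y); case: (y \in S); case: (c y == a); case: (c y \in s).
rewrite cardsU.
have -> : [set y in nbhd e u :&: S | c y == a] :&: [set y in nbhd e u :&: S | c y \in s] = set0.
  apply/setP => y; rewrite !inE; apply/negbTE; apply/negP.
  by case/andP=> /andP[_ /eqP cy] /andP[_ ys]; move: as_; rewrite -cy ys.
rewrite cards0 subn0 mulSn.
apply: leq_add; first by apply: H; rewrite inE eqxx.
by apply: IH => // b bs; apply: H; rewrite inE bs orbT.
Qed.

Lemma size_sat_colors S c u : size (sat_colors S c u) <= deg_in S u %/ k.-1.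
Proof.
rewrite leq_divRL; last by lia.
have U : uniq (sat_colors S c u) by rewrite filter_uniq // undup_uniq.
have H a : a \in sat_colors S c u -> k.-1 <= nbr_count S c u a by rewrite mem_filter => /andP[].
apply: leq_trans (card_nbrs_colored_in U H) _.
by apply: subset_leq_card; apply/subsetP => y; rewrite inE => /andP[].
Qed.

Lemma exists_color_notin v (F : seq nat) : uniq (L v) -> size F < size (L v) ->
  exists2 a, a \in L v & a \notin F.
Proof.
move=> U sz; case: (boolP (all (fun a => a \in F) (L v))) => [H|/allPn //].
have := uniq_leq_size U (fun a aL => allP H a aL); by rewrite leqNgt sz.
Qed.

Lemma extend_deg2 (S : {set T}) c v u w a : v \notin S -> forested_on S c ->
  u \in S -> w \in S -> u != w ->
  nbhd e v :&: S = [set u; w] -> a \in L v -> a != c u -> a != c w ->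
  a \notin sat_colors S c u -> a \notin sat_colors S c w ->
  (c u = c w -> forall p, ~ bicolored_path S c a u w p) ->
  forested_on (v |: S) (recolor c v a).
Proof.
move=> vS cv uS wS uw Nv aL au aw su sw no_path.
have inNv z : z \in S -> e v z -> (z == u) || (z == w).
  move=> zS evz; have : z \in nbhd e v :&: S by rewrite !inE evz zS.
  by rewrite Nv !inE.
apply: forested_extend => //.
- by move=> z zS evz; case/orP: (inNv z zS evz) => /eqP->; rewrite eq_sym.
- move=> z zS evz; apply: nbr_count_lt.
  by case/orP: (inNv z zS evz) => /eqP->.
- move=> b; apply: (leq_ltn_trans (nbr_count_le_deg _ _ _ _)).
  by rewrite /deg_in Nv cards2; have := leq_b1 (u != w); lia.
move=> u1 u2 p u1S u2S e1 e2 u12 c12.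
case/orP: (inNv u1 u1S e1) => /eqP E1; case/orP: (inNv u2 u2S e2) => /eqP E2;
  subst u1 u2; rewrite ?eqxx // in u12.
- exact: no_path.
- move=> Hp; have [p' Hp'] := bicolored_path_rev wS Hp c12.
  exact: (no_path (sym_eq c12) p' Hp').
Qed.

(* If u and w have the same colour, a path as above starts with a neighbour
   of u coloured a, so it suffices that a does not occur around u. *)
Lemma extend_deg2_colors (S : {set T}) c v u w a : v \notin S -> forested_on S c ->
  u \in S -> w \in S -> u != w ->
  nbhd e v :&: S = [set u; w] -> a \in L v -> a != c u -> a != c w ->
  a \notin sat_colors S c u -> a \notin sat_colors S c w ->
  (c u = c w -> a \notin nbr_colors S c u) ->
  forested_on (v |: S) (recolor c v a).
Proof.
move=> vS cv uS wS uw Nv aL au aw su sw Hc.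
apply: (extend_deg2 (u:=u) (w:=w)) => // cuw p Hp.
have [_ cP _] := cv.
have [y yN cy] := bicolored_path_head cP uS uw Hp.
by move: (Hc cuw); rewrite -cy (mem_nbr_colors c yN).
Qed.

Lemma extend_deg1 (S : {set T}) c v a : v \notin S -> forested_on S c ->
  deg_in S v <= 1 -> a \in L v ->
  (forall u, u \in nbhd e v :&: S -> (a != c u) && (a \notin sat_colors S c u)) ->
  forested_on (v |: S) (recolor c v a).
Proof.
move=> vS cv dv aL H.
apply: forested_extend => //.
- move=> z zS evz; have zN : z \in nbhd e v :&: S by rewrite !inE evz zS.
  by have /andP[] := H z zN; rewrite eq_sym.
- move=> z zS evz; apply: nbr_count_lt.
  have zN : z \in nbhd e v :&: S by rewrite !inE evz zS.
  by have /andP[] := H z zN.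
- by move=> b; apply: (leq_ltn_trans (nbr_count_le_deg _ _ _ _)); apply: (leq_ltn_trans dv); lia.
move=> u1 u2 p u1S u2S e1 e2 u12.
have : #|[set u1; u2]| <= deg_in S v.
  by apply: subset_leq_card; apply/subsetP => z; rewrite !inE => /orP[]/eqP->;
    rewrite ?e1 ?e2.
by rewrite cards2 u12 => H2; have := leq_trans H2 dv.
Qed.

Variables (M q : nat).
Hypotheses (kM : k <= M) (maxdeg : forall v, #|nbhd e v| <= M)
  (Lok : forall v, uniq (L v) /\ size (L v) = q).

Definition colorable (S : {set T}) := exists c, forested_on S c.

Notation d := (ceil_div M k.-1).

Lemma ceil_div_predE : d = M.-1 %/ k.-1 + 1.
Proof.
rewrite /ceil_div (_ : M + k.-1.-1 = M.-1 + k.-1); last by lia.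
have k1 : 0 < k.-1 by lia.
by rewrite divnDr // divnn k1.
Qed.

Lemma ceil_div_ge2 : 2 <= d.
Proof.
rewrite ceil_div_predE; suff : 1 <= M.-1 %/ k.-1 by lia.
by rewrite leq_divRL ?mul1n; lia.
Qed.

Lemma exists_color_avoiding v (F : seq nat) : size F < q -> exists2 a, a \in L v & a \notin F.
Proof. by have [U sz] := Lok v; rewrite -sz; apply: exists_color_notin. Qed.

Lemma deg_in_ltn (Sc S : {set T}) u v : Sc \subset S -> v \in S -> v \notin Sc -> e u v ->
  deg_in Sc u < deg_in S u.
Proof.
move=> sub vS vSc euv; apply: proper_card; apply/properP; split.
  by apply/subsetP => y; rewrite !inE => /andP[-> /(subsetP sub) ->].
by exists v; rewrite !inE ?euv ?vS // (negbTE vSc) andbF.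
Qed.

Lemma deg_in_le_pred (S : {set T}) u v : v \notin S -> e u v -> deg_in S u <= M.-1.
Proof.
move=> vS euv; have := maxdeg u.
have : deg_in S u < deg_in setT u by apply: (deg_in_ltn (v:=v)); rewrite ?subsetT ?inE.
by rewrite /deg_in setIT; lia.
Qed.

(* Colouring v adjacent to u (outside S) forbids at most d - 1 saturated
   colours of u: this is where the bound ceil (M / (k - 1)) comes from. *)
Lemma size_sat_colors_lt (S : {set T}) c u v : v \notin S -> e u v ->
  size (sat_colors S c u) < d.
Proof.
move=> vS euv; rewrite ceil_div_predE addn1 ltnS.
by apply: (leq_trans (size_sat_colors _ _ _)); apply: leq_div2r; exact: deg_in_le_pred euv.
Qed.

Lemma sat_colors_nil (S : {set T}) c u : deg_in S u < k.-1 -> sat_colors S c u = [::].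
Proof.
move=> H; apply/size0nil/eqP; rewrite -leqn0.
by apply: (leq_trans (size_sat_colors _ _ _)); rewrite divn_small.
Qed.

Lemma colorable0 : colorable set0.
Proof.
exists (fun v => head 0 (L v)); split.
- by move=> v; rewrite inE.
- by move=> u v; rewrite inE.
move=> a b _; split; first by move=> [|x s] // _ _ /andP[]; rewrite !inE.
by move=> v; rewrite !inE.
Qed.

Lemma notin_flatten_sat (c : T -> nat) (S N : {set T}) a :
  a \notin flatten [seq c u :: sat_colors S c u | u <- enum N] ->
  forall u, u \in N -> (a != c u) && (a \notin sat_colors S c u).
Proof.
move=> H u uN; rewrite -negb_or; apply/negP => Hor; move/negP: H; apply.
by apply/flatten_mapP; exists u; rewrite ?mem_enum // inE.
Qed.

Lemma nbhd_setD1 (S : {set T}) v : nbhd e v :&: (S :\ v) = nbhd e v :&: S.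
Proof.
apply/setP => y; rewrite !inE; case evy: (e v y) => //=.
by case: eqP => // E; rewrite E eirr in evy.
Qed.

Lemma reduce_deg1 (S : {set T}) v : v \in S -> deg_in S v <= 1 -> colorable (S :\ v) ->
  d < q -> colorable S.
Proof.
move=> vS dv [c cv] dq.
have vS' : v \notin S :\ v by rewrite !inE eqxx.
have dv' : deg_in (S :\ v) v <= 1 by rewrite /deg_in nbhd_setD1.
set F := flatten [seq c u :: sat_colors (S :\ v) c u | u <- enum (nbhd e v :&: (S :\ v))].
have sF : size F < q.
  rewrite /F; case: (leqP (deg_in (S :\ v) v) 0) => [d0|d1].
    move: d0; rewrite leqn0 /deg_in cards_eq0 => /eqP ->.
    by rewrite enum_set0 /=; apply: leq_ltn_trans dq; exact: (leq_trans _ ceil_div_ge2).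
  have /cards1P [u Eu] : #|nbhd e v :&: (S :\ v)| == 1 by rewrite eqn_leq dv' d1.
  rewrite Eu enum_set1 /= cats0.
  have : u \in nbhd e v :&: (S :\ v) by rewrite Eu inE.
  rewrite !inE => /andP[evu _].
  by apply: leq_ltn_trans dq; apply: (size_sat_colors_lt c vS'); rewrite esym.
have [a aL aF] := exists_color_avoiding v sF.
exists (recolor c v a); rewrite -(setD1K vS).
by apply: extend_deg1 => //; apply: notin_flatten_sat.
Qed.

Lemma extend_deg2_distinct (S : {set T}) c v u w : v \notin S -> forested_on S c ->
  u \in S -> w \in S -> u != w -> nbhd e v :&: S = [set u; w] -> c u != c w ->
  size (sat_colors S c u) + size (sat_colors S c w) + 2 < q ->
  exists a, forested_on (v |: S) (recolor c v a).
Proof.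
move=> vS cv uS wS uw Nv cuw sq.
have [|a aL] := exists_color_avoiding v
    (F := c u :: c w :: sat_colors S c u ++ sat_colors S c w).
  by rewrite /= size_cat; lia.
rewrite !inE mem_cat !negb_or => /and4P[au aw su sw].
exists a; apply: (extend_deg2_colors (u:=u) (w:=w)) => //.
by move/eqP: cuw.
Qed.

Lemma reduce_deg2 (S : {set T}) v u w su sw du : v \in S -> u != w ->
  nbhd e v :&: S = [set u; w] -> colorable (S :\ v) ->
  (forall c, size (sat_colors (S :\ v) c u) <= su) ->
  (forall c, size (sat_colors (S :\ v) c w) <= sw) ->
  deg_in (S :\ v) u <= du -> su + sw + 2 < q -> su + sw + du + 1 < q -> colorable S.
Proof.
move=> vS uw Nv [c cv] Hsu Hsw Hdu q1 q2.
have vS' : v \notin S :\ v by rewrite !inE eqxx.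
have Nv' : nbhd e v :&: (S :\ v) = [set u; w] by rewrite nbhd_setD1.
have uS : u \in S :\ v by move: (set21 u w); rewrite -Nv' => /setIP[].
have wS : w \in S :\ v by move: (set22 u w); rewrite -Nv' => /setIP[].
rewrite -(setD1K vS).
have [cuw|cuw] := eqVneq (c u) (c w); last first.
  have sq : size (sat_colors (S :\ v) c u) + size (sat_colors (S :\ v) c w) + 2 < q.
    by apply: leq_ltn_trans q1; rewrite leq_add2r leq_add.
  have [a ca] := extend_deg2_distinct vS' cv uS wS uw Nv' cuw sq.
  by exists (recolor c v a).
have [|a aL] := exists_color_avoiding v (F := c u :: sat_colors (S :\ v) c u ++
    sat_colors (S :\ v) c w ++ nbr_colors (S :\ v) c u).
  by rewrite /= !size_cat size_nbr_colors; have := Hsu c; have := Hsw c; lia.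
rewrite !inE !mem_cat !negb_or => /and4P[au su_a sw_a cl].
exists (recolor c v a).
by apply: (extend_deg2_colors (u:=u) (w:=w)) => //; rewrite -?cuw.
Qed.

Lemma cards_le1 (R : {set T}) : #|R| <= 1 -> R = set0 \/ exists r, R = [set r].
Proof.
case: (posnP #|R|) => [/cards0_eq|R1 R2]; first by left.
by right; apply/cards1P; rewrite eqn_leq R1 R2.
Qed.

(* A hub u whose neighbours are the 2-vertices of vs (the other neighbour of
   v being wf v) plus at most one further vertex (the set R). *)
Section Hub.
Variables (S : {set T}) (u : T) (vs' : seq T) (vl : T) (wf : T -> T) (R : {set T}).
Let vs := rcons vs' vl.
Hypotheses (uS : u \in S) (Uvs : uniq vs)
  (leaf_nbhd : forall v, v \in vs -> v \in S /\ nbhd e v :&: S = [set u; wf v])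
  (far_leaf : forall v, v \in vs -> wf v != u /\ wf v \notin vs)
  (hub_nbhd : nbhd e u :&: S = [set x in vs] :|: R) (R_le1 : #|R| <= 1).
Let S0 := S :\: (u |: [set x in vs]).

Lemma hub_S0E y : (y \in S0) = [&& y != u, y \notin vs & y \in S].
Proof. by rewrite /S0 !inE negb_or andbA. Qed.

Lemma hub_leaf_in v : v \in vs -> v \in S.
Proof. by move=> /leaf_nbhd[]. Qed.

Lemma hub_leaf_adj v : v \in vs -> e v u.
Proof.
by move=> vv; move: (set21 u (wf v)); rewrite -(leaf_nbhd vv).2 !inE => /andP[].
Qed.

Lemma hub_far_adj v : v \in vs -> e (wf v) v.
Proof.
by move=> vv; move: (set22 u (wf v)); rewrite -(leaf_nbhd vv).2 !inE esym => /andP[].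
Qed.

Lemma hub_far_in v : v \in vs -> wf v \in S0.
Proof.
move=> vv; have [wu wvs] := far_leaf vv.
by move: (set22 u (wf v)); rewrite -(leaf_nbhd vv).2 hub_S0E wu wvs => /setIP[].
Qed.

Lemma hub_leaf_nbhd (Sc : {set T}) v : v \in vs -> u \in Sc -> wf v \in Sc ->
  Sc \subset S -> nbhd e v :&: Sc = [set u; wf v].
Proof.
move=> vv uSc wSc ScS; apply/setP => y; apply/idP/idP.
  by rewrite -(leaf_nbhd vv).2 !inE => /andP[-> /(subsetP ScS) ->].
rewrite !inE => /orP[]/eqP->; rewrite ?uSc ?wSc andbT; first exact: hub_leaf_adj.
by rewrite esym hub_far_adj.
Qed.

Lemma hub_leaf_init v : v \in vs' -> v \in vs.
Proof. by move=> vv; rewrite mem_rcons inE vv orbT. Qed.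

Lemma hub_part_sub (t : seq T) : {subset t <= vs} -> u |: S0 :|: [set x in t] \subset S.
Proof.
move=> tvs; apply/subsetP => y; rewrite in_setU in_setU1 hub_S0E inE.
by case/orP=> [/orP[/eqP->//|/and3P[_ _ //]]|/tvs/hub_leaf_in].
Qed.

Lemma hub_part_notin (t : seq T) v : v \in vs -> v \notin t -> v \notin u |: S0 :|: [set x in t].
Proof.
move=> vv vt; have vu : v != u by apply/eqP => E; move: (hub_leaf_adj vv); rewrite E eirr.
by rewrite in_setU in_setU1 hub_S0E vv inE (negbTE vu) (negbTE vt).
Qed.

Lemma hub_size_sat (Sc : {set T}) c v : v \in vs -> Sc \subset S -> v \notin Sc ->
  size (sat_colors Sc c u) <= (deg_in S u).-1 %/ k.-1.
Proof.
move=> vv ScS vSc; apply: (leq_trans (size_sat_colors _ _ _)); apply: leq_div2r.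
have euv : e u v by rewrite esym hub_leaf_adj.
by move: (deg_in_ltn ScS (hub_leaf_in vv) vSc euv); case: (deg_in S u).
Qed.

(* Colour u first, avoiding the colours of the far ends of all leaves but the
   last one. *)
Lemma hub_color_center : colorable S0 -> #|R| * d + size vs' < q ->
  exists c1, forested_on (u |: S0) c1 /\ forall v, v \in vs' -> c1 u != c1 (wf v).
Proof.
move=> [c0 cv0] qA.
have uS0 : u \notin S0 by rewrite hub_S0E eqxx.
have NuS0 : nbhd e u :&: S0 \subset R.
  apply/subsetP => y; rewrite inE hub_S0E in_nbhd => /andP[euy /and3P[_ yn yS]].
  have : y \in nbhd e u :&: S by rewrite inE in_nbhd euy yS.
  by rewrite hub_nbhd in_setU inE (negbTE yn).
have [|a0 a0L] := exists_color_avoiding u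
  (F := flatten [seq c0 r :: sat_colors S0 c0 r | r <- enum R] ++ [seq c0 (wf v) | v <- vs']).
  apply: leq_ltn_trans qA; rewrite size_cat size_map leq_add2r.
  case: (cards_le1 R_le1) => [->|[r Rr]]; first by rewrite enum_set0.
  rewrite Rr enum_set1 cards1 /= cats0 mul1n.
  have : r \in nbhd e u :&: S by rewrite hub_nbhd Rr in_setU set11 orbT.
  rewrite !inE => /andP[eur _].
  by apply: (size_sat_colors_lt c0 uS0); rewrite esym.
rewrite mem_cat negb_or => /andP[a0R a0W].
exists (recolor c0 u a0); split.
  apply: extend_deg1 => //; first exact: leq_trans (subset_leq_card NuS0) R_le1.
  by move=> y yN; apply: (notin_flatten_sat a0R); apply: (subsetP NuS0).
move=> v vv; have vvs := hub_leaf_init vv.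
rewrite recolor_at (recolor_notin _ _ uS0 (hub_far_in vvs)).
by apply: contraNneq a0W => ->; apply: map_f.
Qed.

Lemma hub_add_leaf (Sc : {set T}) c v : v \in vs -> u |: S0 \subset Sc -> Sc \subset S ->
  v \notin Sc -> forested_on Sc c -> c u != c (wf v) ->
  (deg_in S u).-1 %/ k.-1 + d + 1 < q ->
  exists a, forested_on (v |: Sc) (recolor c v a).
Proof.
move=> vv S0Sc ScS vSc cv cuw qB.
have uSc : u \in Sc by apply: (subsetP S0Sc); rewrite in_setU1 eqxx.
have wSc : wf v \in Sc by apply: (subsetP S0Sc); rewrite in_setU1 hub_far_in ?orbT.
have uw : u != wf v by rewrite eq_sym; have [] := far_leaf vv.
apply: (extend_deg2_distinct vSc cv uSc wSc uw (hub_leaf_nbhd vv uSc wSc ScS) cuw).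
have h1 := hub_size_sat c vv ScS vSc.
have h2 := size_sat_colors_lt c vSc (hub_far_adj vv).
lia.
Qed.

Lemma hub_color_leaves c1 : forested_on (u |: S0) c1 ->
  (forall v, v \in vs' -> c1 u != c1 (wf v)) -> (deg_in S u).-1 %/ k.-1 + d + 1 < q ->
  exists c, forested_on (u |: S0 :|: [set x in vs']) c /\ {in u |: S0, c =1 c1}.
Proof.
move=> cv1 c1w qB.
suff : forall t, uniq t -> {subset t <= vs'} ->
    exists c, forested_on (u |: S0 :|: [set x in t]) c /\ {in u |: S0, c =1 c1}.
  by apply; [move: Uvs; rewrite rcons_uniq => /andP[] | ].
elim=> [|v t IH] /=.
  move=> _ _; exists c1; split => //.
  by rewrite (_ : [set x in [::]] = set0) ?setU0 //; apply/setP => z; rewrite !inE.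
case/andP=> vt Ut sub.
have [c [cv ag]] := IH Ut (fun z zt => sub z (mem_behead (s := v :: t) zt)).
have vv : v \in vs by apply/hub_leaf_init/sub; rewrite inE eqxx.
have vSc := hub_part_notin vv vt.
have ScS : u |: S0 :|: [set x in t] \subset S.
  by apply: hub_part_sub => z zt; apply/hub_leaf_init/sub; rewrite inE zt orbT.
have cuw : c u != c (wf v).
  by rewrite !ag ?c1w ?sub ?in_setU1 ?eqxx ?hub_far_in ?orbT ?inE ?eqxx.
have [a ca] := hub_add_leaf vv (subsetUl _ _) ScS vSc cv cuw qB.
exists (recolor c v a); split.
  by rewrite set_cons setUCA.
by move=> z zS1; rewrite (recolor_notin _ _ vSc) ?ag // in_setU zS1.
Qed.

(* When u and wf vl have the same colour, a bicoloured path from u to wf vl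
   would have to leave u through a leaf v of vs' coloured a and continue to
   wf v, but c (wf v) differs from c u by the choice of the colour of u. *)
Lemma hub_no_bicolored_path (Sc : {set T}) c a p :
  Sc \subset S -> vl \notin Sc -> u \in Sc -> forested_on Sc c ->
  (forall v, v \in vs' -> c u != c (wf v)) ->
  a \notin [seq c r | r <- enum R] -> ~ bicolored_path Sc c a u (wf vl) p.
Proof.
move=> ScS vSc uSc [_ cP _] cw aR [/= /andP[uyp Uyp] Pa La Al].
have vvl : vl \in vs by rewrite mem_rcons mem_head.
have uw : u != wf vl by rewrite eq_sym; have [] := far_leaf vvl.
case: p uyp Uyp Pa La Al => [|y p'] /=; first by move=> _ _ _ E; rewrite E eqxx in uw.
move=> uyp Uyp /andP[euy Pa] La /andP[/andP[ySc cy] Al].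
have cya : c y = a.
  by have := cP u y uSc ySc euy; case/orP: cy => /eqP ->; rewrite ?eqxx.
have : y \in nbhd e u :&: S by rewrite !inE euy (subsetP ScS).
rewrite hub_nbhd !inE => /orP[yvs|yR]; last by move: aR; rewrite -cya (map_f c) // mem_enum.
have yvs' : y \in vs'.
  move: yvs; rewrite mem_rcons inE => /orP[/eqP Ey|//].
  by move: vSc; rewrite -Ey ySc.
have yv := hub_leaf_init yvs'.
case: p' uyp Uyp Pa La Al => [|y2 p''] /=.
  by move=> _ _ _ Ey; have [_] := far_leaf vvl; rewrite -Ey yvs.
rewrite !inE !negb_or => /andP[_ /andP[uy2 _]] _ /andP[eyy2 _] _ /andP[/andP[y2Sc cy2] _].
have : y2 \in nbhd e y :&: S by rewrite !inE eyy2 (subsetP ScS).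
rewrite (leaf_nbhd yv).2 !inE eq_sym (negbTE uy2) /= => /eqP Ey2.
have cy2a : c y2 != a by rewrite -cya eq_sym; exact: cP ySc y2Sc eyy2.
by move: cy2; rewrite (negbTE cy2a) /= Ey2 eq_sym (negbTE (cw y yvs')).
Qed.

Lemma reduce_hub : colorable S0 ->
  #|R| * d + size vs' < q ->
  (deg_in S u).-1 %/ k.-1 + d + 1 < q ->
  (deg_in S u).-1 %/ k.-1 + d + #|R| < q ->
  colorable S.
Proof.
move=> cS0 qA qB qC.
have [c1 [cv1 c1w]] := hub_color_center cS0 qA.
have [c [cv ag]] := hub_color_leaves cv1 c1w qB.
set Sc := u |: S0 :|: [set x in vs'] in cv.
have vlvs : vl \in vs by rewrite mem_rcons mem_head.
have vSc : vl \notin Sc.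
  by apply: hub_part_notin; move: Uvs; rewrite rcons_uniq => /andP[].
have ScS : Sc \subset S := hub_part_sub hub_leaf_init.
have SE : vl |: Sc = S.
  apply/setP => z; rewrite /Sc in_setU1 in_setU in_setU1 hub_S0E inE mem_rcons inE.
  case: (z =P vl) => [->|_] /=; first by rewrite hub_leaf_in.
  case: (z =P u) => [->|_] /=; first by rewrite uS.
  by case zv: (z \in vs') => /=; [rewrite hub_leaf_in ?hub_leaf_init | rewrite orbF].
have cu_w v : v \in vs' -> c u != c (wf v).
  move=> vv; have vvs := hub_leaf_init vv.
  by rewrite !ag ?c1w // ?in_setU1 ?eqxx ?hub_far_in ?orbT.
have uSc : u \in Sc by rewrite /Sc in_setU in_setU1 eqxx.
rewrite -SE; have [cuw|cuw] := eqVneq (c u) (c (wf vl)); last first.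
  have [a ca] := hub_add_leaf vlvs (subsetUl _ _) ScS vSc cv cuw qB.
  by exists (recolor c vl a).
have wSc : wf vl \in Sc by rewrite /Sc in_setU in_setU1 hub_far_in ?orbT.
have uw : u != wf vl by rewrite eq_sym; have [] := far_leaf vlvs.
have h1 := hub_size_sat c vlvs ScS vSc.
have h2 := size_sat_colors_lt c vSc (hub_far_adj vlvs).
have [|a aL] := exists_color_avoiding vl (F := c u :: sat_colors Sc c u ++
    sat_colors Sc c (wf vl) ++ [seq c r | r <- enum R]).
  by rewrite /= !size_cat size_map -cardE; lia.
rewrite !inE !mem_cat !negb_or => /and4P[au su sw aR].
exists (recolor c vl a).
apply: (extend_deg2 (u:=u) (w:=wf vl)) => //; rewrite -?cuw //.
- exact: hub_leaf_nbhd.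
- by move=> _ p; apply: hub_no_bicolored_path.
Qed.

End Hub.

Definition other_nbr (S : {set T}) v u := odflt u [pick y in nbhd e v :&: S | y != u].

Definition deg2_nbrs (S : {set T}) u := [set y in nbhd e u :&: S | deg_in S y == 2].

Lemma nbhd_deg2 (S : {set T}) v u : deg_in S v = 2 -> u \in nbhd e v :&: S ->
  nbhd e v :&: S = [set u; other_nbr S v u] /\ other_nbr S v u != u.
Proof.
move=> dv uN.
have : #|(nbhd e v :&: S) :\ u| == 1.
  by move: dv; rewrite /deg_in (cardsD1 u) uN add1n => -[->].
case/cards1P => y Ey.
have yN : y \in (nbhd e v :&: S) :\ u by rewrite Ey inE.
have -> : other_nbr S v u = y.
  rewrite /other_nbr; case: pickP => [z /andP[zN zu]|H] /=.
    have : z \in (nbhd e v :&: S) :\ u by rewrite in_setD1 zu zN.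
    by rewrite Ey inE => /eqP.
  by move: (H y); move: yN; rewrite !inE => /andP[-> ->].
split; last by move: yN; rewrite !inE => /andP[].
by rewrite -(setD1K uN) Ey.
Qed.

Lemma nbhd_deg2_eq (S : {set T}) v w u : deg_in S v = 2 -> w \in nbhd e v :&: S ->
  u \in nbhd e v :&: S -> u != w -> nbhd e v :&: S = [set w; u].
Proof.
move=> dv wN uN uw; have [Nv _] := nbhd_deg2 dv wN.
have : u \in [set w; other_nbr S v w] by rewrite -Nv.
by rewrite !inE (negbTE uw) /= => /eqP ->.
Qed.

Lemma colorable_setD1 (S : {set T}) v :
  (forall S' : {set T}, #|S'| < #|S| -> colorable S') -> v \in S -> colorable (S :\ v).
Proof. by move=> IH vS; apply: IH; rewrite (cardsD1 v S) vS. Qed.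

Lemma reduce_hub_deg2 (S : {set T}) u m :
  u \in S -> 0 < m -> m <= #|deg2_nbrs S u| -> deg_in S u - m <= 1 ->
  (forall v, v \in deg2_nbrs S u -> forall y, y \in nbhd e v :&: S -> deg_in S y != 2) ->
  (forall S' : {set T}, #|S'| < #|S| -> colorable S') ->
  (deg_in S u - m) * d + m.-1 < q -> (deg_in S u).-1 %/ k.-1 + d + 1 < q ->
  (deg_in S u).-1 %/ k.-1 + d + (deg_in S u - m) < q -> colorable S.
Proof.
move=> uS m0 mB dm no_deg2 IH qA qB qC.
have szv : size (take m (enum (deg2_nbrs S u))) = m by rewrite size_takel // -cardE.
have U0 : uniq (take m (enum (deg2_nbrs S u))) by apply/take_uniq/enum_uniq.
have inB v : v \in take m (enum (deg2_nbrs S u)) -> v \in deg2_nbrs S u.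
  by move=> /mem_take; rewrite mem_enum.
move: szv U0 inB; case: (take m _) => [|x s] /=; first by move=> E; move: m0; rewrite -E.
move=> szv U0 inB.
have vsE : rcons (belast x s) (last x s) = x :: s by rewrite -lastI.
have Bp v : v \in deg2_nbrs S u -> [/\ v \in S, deg_in S v = 2 & u \in nbhd e v :&: S].
  by rewrite !inE => /andP[/andP[euv vS] /eqP dv]; rewrite vS dv esym euv uS.
have vsN : [set y in x :: s] \subset nbhd e u :&: S.
  by apply/subsetP => y; rewrite inE => /inB; rewrite inE => /andP[].
have cvs : #|[set y in x :: s]| = m by rewrite cardsE (card_uniqP (U0 : uniq (x :: s))).
set R := (nbhd e u :&: S) :\: [set y in x :: s].
have cR : #|R| = deg_in S u - m by rewrite cardsD /deg_in (setIidPr vsN) cvs.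
apply: (reduce_hub (vs' := belast x s) (vl := last x s) (wf := fun v => other_nbr S v u) (R := R)).
- exact: uS.
- by rewrite vsE.
- rewrite vsE => v /inB /Bp [vS dv uN]; split => //; exact: (nbhd_deg2 dv uN).1.
- rewrite vsE => v vv; have [vS dv uN] := Bp v (inB v vv).
  have [Nv ou] := nbhd_deg2 dv uN; split => //.
  have oN : other_nbr S v u \in nbhd e v :&: S by rewrite Nv set22.
  by apply: contra (no_deg2 v (inB v vv) _ oN) => /inB /Bp [_ ->].
- rewrite vsE; apply/setP => y; rewrite /R !inE.
  by move: (subsetP vsN y); rewrite !inE; case: (y == x); case: (y \in s);
    case: (e u y); case: (y \in S) => // /(_ isT).
- by rewrite cR.
- apply: IH; apply: proper_card; apply/properP; split.
    by apply/subsetP => y; rewrite !inE => /andP[_ ->].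
  by exists u; rewrite // !inE eqxx.
- by move: qA; rewrite cR size_belast -szv.
- exact: qB.
- by rewrite cR.
Qed.

Definition major (S : {set T}) := [set x in S | 3 <= deg_in S x].
Definition minor (S : {set T}) := [set y in S | deg_in S y == 2].
Definition major_nbrs (S : {set T}) y := [set x in major S | e y x].

Lemma double_count (A B : {set T}) (w : T -> nat) :
  \sum_(x in A) \sum_(y in B | e x y) w y = \sum_(y in B) w y * #|[set x in A | e y x]|.
Proof.
under eq_bigr => x _ do rewrite big_mkcondr.
rewrite exchange_big /=; apply: eq_bigr => y _; rewrite -big_mkcondr.
rewrite (eq_bigl (fun x => x \in [set x in A | e y x])); last by move=> x; rewrite !inE esym.
by rewrite sum_nat_const mulnC.
Qed.

(* Discharging with initial charge alpha * deg x - beta: a 2-vertex starts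
   at -2 and receives w y from each of its major neighbours, and the major
   vertices stay nonnegative after sending. *)
Lemma discharge (S : {set T}) alpha beta (w : T -> nat) :
  (forall x, x \in S -> 2 <= deg_in S x) ->
  (forall x, x \in major S -> beta + \sum_(y in minor S | e x y) w y <= alpha * deg_in S x) ->
  (forall y, y \in minor S -> w y * #|major_nbrs S y| = 2) ->
  2 * alpha + 2 = beta -> beta * #|S| <= alpha * \sum_(v in S) deg_in S v.
Proof.
move=> mindeg Hmajor Hminor Hab.
have SA : S :&: major S = major S.
  by apply/setP => x; rewrite !inE; case: (x \in S); rewrite ?andbF.
have SB : S :\: major S = minor S.
  apply/setP => x; rewrite !inE; case xS: (x \in S); rewrite ?andbF //=.
  by have := mindeg x xS; rewrite -ltnNge; case: (deg_in S x) => [|[|[|]]].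
rewrite (big_setID (major S)) /= SA SB -(cardsID (major S) S) SA SB.
have EB : \sum_(v in minor S) deg_in S v = 2 * #|minor S|.
  rewrite (eq_bigr (fun _ => 2)); first by rewrite sum_nat_const mulnC.
  by move=> v; rewrite inE => /andP[_ /eqP].
have LA : \sum_(x in major S) (beta + \sum_(y in minor S | e x y) w y) <=
          \sum_(x in major S) alpha * deg_in S x by apply: leq_sum => x; apply: Hmajor.
rewrite big_split /= sum_nat_const double_count in LA.
rewrite (eq_bigr (fun _ => 2)) ?sum_nat_const -?big_distrr /= in LA; last by move=> y /Hminor.
rewrite EB mulnDr; move: LA; set SA' := \sum_(i in major S) deg_in S i.
rewrite -Hab; nia.
Qed.

Lemma sum_minor_nbrs (S : {set T}) x : \sum_(y in minor S | e x y) 1 = #|deg2_nbrs S x|.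
Proof.
rewrite sum1dep_card; apply: eq_card => y; rewrite !inE.
by case: (e x y); case: (y \in S); rewrite /= ?andbT ?andbF.
Qed.

Lemma card_deg2_nbrs_le (S : {set T}) x : #|deg2_nbrs S x| <= deg_in S x.
Proof. by apply: subset_leq_card; apply/subsetP => y; rewrite inE => /andP[]. Qed.

Lemma card_major_nbrs (S : {set T}) y : y \in minor S ->
  (forall z, z \in nbhd e y :&: S -> 3 <= deg_in S z) ->
  #|major_nbrs S y| = 2.
Proof.
rewrite inE => /andP[_ /eqP dy] H.
rewrite -dy /deg_in; apply: eq_card => z; rewrite !inE.
case ez: (e y z); case zS: (z \in S); rewrite ?andbF ?andbT //=.
by apply: H; rewrite !inE ez zS.
Qed.

Lemma card_major_nbrs_le (S : {set T}) y : y \in minor S -> #|major_nbrs S y| <= 2.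
Proof.
rewrite inE => /andP[yS /eqP dy]; rewrite -dy; apply: subset_leq_card.
by apply/subsetP => z; rewrite !inE => /andP[/andP[zS _] eyz]; rewrite eyz zS.
Qed.

Lemma sum_deg_ge_3 (S : {set T}) :
  (forall x, x \in S -> 2 <= deg_in S x) ->
  (forall v u, v \in S -> u \in nbhd e v :&: S -> deg_in S v = 2 -> 3 < deg_in S u) ->
  (forall u, u \in S -> deg_in S u = 4 -> #|deg2_nbrs S u| <= 2) ->
  (forall u, u \in S -> deg_in S u = 5 -> #|deg2_nbrs S u| <= 4) ->
  3 * #|S| <= \sum_(v in S) deg_in S v.
Proof.
move=> mindeg light hub4 hub5.
have Hmajor x : x \in major S -> 6 + \sum_(y in minor S | e x y) 1 <= 2 * deg_in S x.
  rewrite inE sum_minor_nbrs => /andP[xS dx].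
  have := card_deg2_nbrs_le S x.
  case: (eqVneq (deg_in S x) 3) => [d3|n3].
    suff -> : #|deg2_nbrs S x| = 0 by rewrite d3.
    apply/eqP; rewrite cards_eq0; apply/eqP/setP => y; rewrite !inE.
    apply/negbTE/negP => /andP[/andP[exy yS] /eqP dy].
    by have := light y x yS; rewrite !inE esym exy xS d3 => /(_ isT dy).
  case: (eqVneq (deg_in S x) 4) => [d4|n4]; first by have := hub4 x xS d4; lia.
  case: (eqVneq (deg_in S x) 5) => [d5|n5]; first by have := hub5 x xS d5; lia.
  lia.
have Hminor y : y \in minor S -> 1 * #|major_nbrs S y| = 2.
  move=> yB; rewrite mul1n; apply: card_major_nbrs => // z zN.
  by move: yB; rewrite inE => /andP[yS /eqP dy]; apply: ltnW; apply: light zN dy.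
have := discharge mindeg Hmajor Hminor erefl; lia.
Qed.

Lemma sum_deg_ge_8_3 (S : {set T}) :
  (forall x, x \in S -> 2 <= deg_in S x) ->
  (forall v u, v \in S -> u \in nbhd e v :&: S -> deg_in S v = 2 -> deg_in S u != 2) ->
  (forall u, u \in S -> deg_in S u = 3 -> #|deg2_nbrs S u| <= 1) ->
  8 * #|S| <= 3 * \sum_(v in S) deg_in S v.
Proof.
move=> mindeg no22 hub3.
have Hmajor x : x \in major S -> 8 + \sum_(y in minor S | e x y) 1 <= 3 * deg_in S x.
  rewrite inE sum_minor_nbrs => /andP[xS dx].
  have := card_deg2_nbrs_le S x.
  case: (eqVneq (deg_in S x) 3) => [d3|n3]; first by have := hub3 x xS d3; lia.
  lia.
have Hminor y : y \in minor S -> 1 * #|major_nbrs S y| = 2.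
  move=> yB; rewrite mul1n; apply: card_major_nbrs => // z zN.
  move: yB; rewrite inE => /andP[yS /eqP dy].
  have := no22 y z yS zN dy; have := mindeg z (setIP zN).2; lia.
have := discharge mindeg Hmajor Hminor erefl; lia.
Qed.

Section NoThreads.
Variable S : {set T}.
Hypothesis mindeg : forall x, x \in S -> 2 <= deg_in S x.
Hypothesis no_thread : forall v w u, v \in S -> w \in nbhd e v :&: S -> u \in nbhd e v :&: S ->
  deg_in S v = 2 -> deg_in S w = 2 -> u != w -> 3 < deg_in S u.

Lemma nbr_in_major_nbrs y z : z \in nbhd e y :&: S -> deg_in S z != 2 -> z \in major_nbrs S y.
Proof.
move=> zN; have zS := (setIP zN).2; have := mindeg zS.
by move: zN; rewrite !inE => /andP[-> ->] /= ? ?; lia.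
Qed.

Lemma other_nbr_major y x : y \in minor S -> x \in nbhd e y :&: S -> deg_in S x <= 3 ->
  other_nbr S y x \in major_nbrs S y.
Proof.
rewrite inE => /andP[yS /eqP dy] xN dx.
have [Nv ox] := nbhd_deg2 dy xN.
have oN : other_nbr S y x \in nbhd e y :&: S by rewrite Nv set22.
apply: nbr_in_major_nbrs => //; apply/eqP => do2.
by have := no_thread yS oN xN dy do2; rewrite eq_sym ox => /(_ isT); lia.
Qed.

Lemma major_nbrs_gt0 y : y \in minor S -> 0 < #|major_nbrs S y|.
Proof.
move=> yB; move: (yB); rewrite inE => /andP[yS /eqP dy].
have : 0 < deg_in S y by rewrite dy.
rewrite /deg_in card_gt0 => /set0Pn [w wN]; apply/card_gt0P.
have [dw|dw] := eqVneq (deg_in S w) 2; last by exists w; apply: nbr_in_major_nbrs.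
by exists (other_nbr S y w); apply: other_nbr_major; rewrite ?dw.
Qed.

(* A 2-vertex with two major neighbours sends 1 to each of them, one with a
   single major neighbour sends it 2. *)
Lemma sum_deg_ge_12_5 : 12 * #|S| <= 5 * \sum_(v in S) deg_in S v.
Proof.
pose w y := 3 - #|major_nbrs S y|.
have Hminor y : y \in minor S -> w y * #|major_nbrs S y| = 2.
  by move=> yB; have := card_major_nbrs_le yB; have := major_nbrs_gt0 yB; rewrite /w;
    case: #|_| => [|[|[|]]].
have Hmajor x : x \in major S -> 12 + \sum_(y in minor S | e x y) w y <= 5 * deg_in S x.
  move=> xA; move: (xA); rewrite inE => /andP[xS dx].
  have Hb := card_deg2_nbrs_le S x.
  case: (eqVneq (deg_in S x) 3) => [d3|n3].
    have : \sum_(y in minor S | e x y) w y <= \sum_(y in minor S | e x y) 1.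
      apply: leq_sum => y /andP[yB exy].
      have xN : x \in nbhd e y :&: S by rewrite !inE esym exy xS.
      have dy : deg_in S y = 2 by move: yB; rewrite inE => /andP[_ /eqP].
      have [_ ox] := nbhd_deg2 dy xN.
      have : #|[set x; other_nbr S y x]| <= #|major_nbrs S y|.
        apply: subset_leq_card; apply/subsetP => z; rewrite !inE => /orP[]/eqP->.
          by rewrite esym exy xS dx.
        by have := other_nbr_major yB xN; rewrite d3 !inE => /(_ isT).
      rewrite cards2 eq_sym ox /w; lia.
    rewrite sum_minor_nbrs d3; move: Hb; rewrite d3; lia.
  have : \sum_(y in minor S | e x y) w y <= \sum_(y in minor S | e x y) 2.
    by apply: leq_sum => y /andP[yB _]; have := major_nbrs_gt0 yB; rewrite /w; lia.
  have -> : \sum_(y in minor S | e x y) 2 = 2 * #|deg2_nbrs S x|.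
    by rewrite -sum_minor_nbrs big_distrr /=; apply: eq_bigr => y _; rewrite muln1.
  lia.
have := discharge mindeg Hmajor Hminor erefl; lia.
Qed.

End NoThreads.

Lemma deg_in_setD1_lt (S : {set T}) v z : v \in S -> z \in nbhd e v :&: S ->
  deg_in (S :\ v) z < deg_in S z.
Proof.
move=> vS zN; apply: (deg_in_ltn (subsetDl S [set v]) vS); first by rewrite !inE eqxx.
by move: zN; rewrite !inE esym => /andP[].
Qed.

Lemma divn_predk_le1 n : n <= 5 -> n %/ k.-1 <= 1.
Proof. by move=> n5; rewrite -ltnS ltn_divLR; lia. Qed.

Lemma reduce_deg2_light (S : {set T}) v u : v \in S -> deg_in S v = 2 ->
  u \in nbhd e v :&: S -> deg_in S u <= k.-1 -> d + deg_in S u <= q -> d + 1 < q ->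
  colorable (S :\ v) -> colorable S.
Proof.
move=> vS dv uN du qu qd cS'.
have [Nv ou] := nbhd_deg2 dv uN.
have vS' : v \notin S :\ v by rewrite !inE eqxx.
have oN : other_nbr S v u \in nbhd e v :&: S by rewrite Nv set22.
have eov : e (other_nbr S v u) v by move: oN; rewrite !inE esym => /andP[].
have dvu := deg_in_setD1_lt vS uN.
have dd := ceil_div_ge2.
apply: (reduce_deg2 (su := 0) (sw := d.-1) (du := (deg_in S u).-1) vS _ Nv cS').
- by rewrite eq_sym.
- by move=> c; rewrite sat_colors_nil //; lia.
- by move=> c; have := size_sat_colors_lt c vS' eov; lia.
- lia.
- lia.
- lia.
Qed.

Lemma reduce_deg2_pair (S : {set T}) v w u : v \in S -> deg_in S v = 2 ->
  w \in nbhd e v :&: S -> u \in nbhd e v :&: S -> u != w ->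
  deg_in S w = 2 -> deg_in S u <= k.-1 -> 2 < q -> colorable (S :\ v) -> colorable S.
Proof.
move=> vS dv wN uN uw dw du q2 cS'.
have ltw := deg_in_setD1_lt vS wN; have ltu := deg_in_setD1_lt vS uN.
apply: (reduce_deg2 (su := 0) (sw := 0) (du := 1) vS _ (nbhd_deg2_eq dv wN uN uw) cS').
- by rewrite eq_sym.
- by move=> c; rewrite sat_colors_nil //; lia.
- by move=> c; rewrite sat_colors_nil //; lia.
- lia.
- lia.
- lia.
Qed.

Lemma colorable_sparse_12_5 : q = d + 1 ->
  (forall S : {set T}, S != set0 -> 5 * \sum_(v in S) deg_in S v < 12 * #|S|) ->
  forall S : {set T}, (forall S' : {set T}, #|S'| < #|S| -> colorable S') -> colorable S.
Proof.
move=> qE sparse S IH.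
have [->|SS] := eqVneq S set0; first exact: colorable0.
have dd := ceil_div_ge2.
have [/exists_inP [v vS dv]|/exists_inPn low] := boolP [exists v in S, deg_in S v <= 1].
  by apply: (reduce_deg1 vS dv (colorable_setD1 IH vS)); lia.
have mindeg x : x \in S -> 2 <= deg_in S x by move=> /low; rewrite -ltnNge.
have [/exists_inP [v vS /exists_inP [w wN /exists_inP [u uN /and4P[/eqP dv /eqP dw uw du]]]]
     |/exists_inPn no_thread] := boolP [exists v in S, [exists w in nbhd e v :&: S,
     [exists u in nbhd e v :&: S, [&& deg_in S v == 2, deg_in S w == 2, u != w & deg_in S u <= 3]]]].
  by apply: (reduce_deg2_pair vS dv wN uN uw dw _ _ (colorable_setD1 IH vS)); lia.
exfalso; have := sparse S SS; rewrite ltnNge; apply/negP/negPn.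
apply: sum_deg_ge_12_5 => // v w u vS wN uN dv dw uw; rewrite ltnNge.
apply: contra (no_thread v vS) => du.
by apply/exists_inP; exists w => //; apply/exists_inP; exists u; rewrite ?dv ?dw ?uw.
Qed.

Lemma colorable_sparse_8_3 : q = d + 2 ->
  (forall S : {set T}, S != set0 -> 3 * \sum_(v in S) deg_in S v < 8 * #|S|) ->
  forall S : {set T}, (forall S' : {set T}, #|S'| < #|S| -> colorable S') -> colorable S.
Proof.
move=> qE sparse S IH.
have [->|SS] := eqVneq S set0; first exact: colorable0.
have dd := ceil_div_ge2.
have [/exists_inP [v vS dv]|/exists_inPn low] := boolP [exists v in S, deg_in S v <= 1].
  by apply: (reduce_deg1 vS dv (colorable_setD1 IH vS)); lia.
have mindeg x : x \in S -> 2 <= deg_in S x by move=> /low; rewrite -ltnNge.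
have [/exists_inP [v vS /exists_inP [u uN /andP[/eqP dv /eqP du]]]|/exists_inPn no22] :=
  boolP [exists v in S, [exists u in nbhd e v :&: S, (deg_in S v == 2) && (deg_in S u == 2)]].
  by apply: (reduce_deg2_light vS dv uN _ _ _ (colorable_setD1 IH vS)); rewrite ?du; lia.
have no22' v u : v \in S -> u \in nbhd e v :&: S -> deg_in S v = 2 -> deg_in S u != 2.
  move=> vS uN dv; apply: contra (no22 v vS) => du.
  by apply/exists_inP; exists u; rewrite ?dv.
have hub_ok u : u \in S -> forall v, v \in deg2_nbrs S u ->
    forall y, y \in nbhd e v :&: S -> deg_in S y != 2.
  by move=> uS v; rewrite !inE => /andP[/andP[_ vS] /eqP dv] y yN; apply: no22' yN dv.
have [/exists_inP [u uS /andP[/eqP du bu]]|/exists_inPn no3] :=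
  boolP [exists u in S, (deg_in S u == 3) && (2 <= #|deg2_nbrs S u|)].
  have div2 : 2 %/ k.-1 = 0 by rewrite divn_small //; lia.
  by apply: (reduce_hub_deg2 (m := 2) uS _ bu _ (hub_ok u uS) IH); rewrite ?du ?div2; lia.
exfalso; have := sparse S SS; rewrite ltnNge; apply/negP/negPn.
apply: sum_deg_ge_8_3 => // u uS du.
by have := no3 u uS; rewrite du eqxx /= -ltnNge.
Qed.

Lemma colorable_sparse_3 : q = d + 3 ->
  (forall S : {set T}, S != set0 -> 1 * \sum_(v in S) deg_in S v < 3 * #|S|) ->
  forall S : {set T}, (forall S' : {set T}, #|S'| < #|S| -> colorable S') -> colorable S.
Proof.
move=> qE sparse S IH.
have [->|SS] := eqVneq S set0; first exact: colorable0.
have dd := ceil_div_ge2.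
have [/exists_inP [v vS dv]|/exists_inPn low] := boolP [exists v in S, deg_in S v <= 1].
  by apply: (reduce_deg1 vS dv (colorable_setD1 IH vS)); lia.
have mindeg x : x \in S -> 2 <= deg_in S x by move=> /low; rewrite -ltnNge.
have [/exists_inP [v vS /exists_inP [u uN /andP[/eqP dv du]]]|/exists_inPn no_light] :=
  boolP [exists v in S, [exists u in nbhd e v :&: S, (deg_in S v == 2) && (deg_in S u <= 3)]].
  by apply: (reduce_deg2_light vS dv uN _ _ _ (colorable_setD1 IH vS)); lia.
have heavy v u : v \in S -> u \in nbhd e v :&: S -> deg_in S v = 2 -> 3 < deg_in S u.
  move=> vS uN dv; rewrite ltnNge; apply: contra (no_light v vS) => du.
  by apply/exists_inP; exists u; rewrite ?dv.
have hub_ok u : u \in S -> forall v, v \in deg2_nbrs S u ->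
    forall y, y \in nbhd e v :&: S -> deg_in S y != 2.
  move=> uS v; rewrite !inE => /andP[/andP[_ vS] /eqP dv] y yN.
  by have := heavy v y vS yN dv; case: eqP => // ->.
have div3 := divn_predk_le1 (isT : 3 <= 5); have div4 := divn_predk_le1 (isT : 4 <= 5).
have [/exists_inP [u uS /andP[/eqP du bu]]|/exists_inPn no4] :=
  boolP [exists u in S, (deg_in S u == 4) && (3 <= #|deg2_nbrs S u|)].
  by apply: (reduce_hub_deg2 (m := 3) uS _ bu _ (hub_ok u uS) IH); rewrite ?du; lia.
have [/exists_inP [u uS /andP[/eqP du bu]]|/exists_inPn no5] :=
  boolP [exists u in S, (deg_in S u == 5) && (5 <= #|deg2_nbrs S u|)].
  by apply: (reduce_hub_deg2 (m := 5) uS _ bu _ (hub_ok u uS) IH); rewrite ?du; lia.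
exfalso; have := sparse S SS; rewrite ltnNge; apply/negP/negPn.
rewrite mul1n; apply: sum_deg_ge_3 => // u uS du.
- by have := no4 u uS; rewrite du eqxx /= -ltnNge.
- by have := no5 u uS; rewrite du eqxx /= -ltnNge.
Qed.

End ListColoring.

Lemma card_arcs_in (T : finType) (e : rel T) (S : {set T}) :
  #|[set x : T * T | e x.1 x.2 && (x.1 \in S) && (x.2 \in S)]| =
  \sum_(v in S) #|nbhd e v :&: S|.
Proof.
rewrite -sum1dep_card.
have -> : \sum_(x | e x.1 x.2 && (x.1 \in S) && (x.2 \in S)) 1 =
   \sum_(p | (p.1 \in S) && (p.2 \in S)) (if e p.1 p.2 then 1 else 0).
  rewrite big_mkcond [RHS]big_mkcond; apply: eq_bigr => [[x y]] _ /=.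
  by case: (e x y); case: (x \in S); case: (y \in S).
rewrite -(pair_big (fun x => x \in S) (fun y => y \in S) (fun x y => if e x y then 1 else 0)) /=.
apply: eq_bigr => v vS; rewrite -big_mkcondr sum1dep_card.
by apply: eq_card => y; rewrite !inE andbC.
Qed.

Lemma ratio_lt_natr (a b p s : nat) : 0 < b -> 0 < s ->
  (a%:R / b%:R < p%:R / s%:R :> rat)%R -> a * s < p * b.
Proof.
move=> b0 s0; rewrite ltr_pdivlMr ?ltr0n // mulrAC ltr_pdivrMr ?ltr0n //.
by rewrite -!natrM ltr_nat.
Qed.

(* The witness subgraph is the one induced by S, with one arc per incidence. *)
Lemma sum_deg_lt_of_mad (T : finType) (e : rel T) (p s : nat) : symmetric e -> 0 < s ->
  (mad e < p%:R / s%:R)%R -> forall S : {set T}, S != set0 ->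
  s * \sum_(v in S) #|nbhd e v :&: S| < p * #|S|.
Proof.
move=> esym s0 Hm S SS.
set F := [set x : T * T | e x.1 x.2 && (x.1 \in S) && (x.2 \in S)].
have sub : is_subgraph e S F.
  apply/forallP => [[x y]]; apply/implyP; rewrite !inE /= => /andP[/andP[exy xS] yS].
  by rewrite exy xS yS esym exy.
have av : avg_deg e (S, F) = (#|F|%:R / #|S|%:R)%R by rewrite /avg_deg /= sub SS.
have := le_bigmax 0%R (avg_deg e) (S, F); rewrite -/(mad e) av => H.
have S0 : 0 < #|S| by rewrite card_gt0.
by have := ratio_lt_natr S0 s0 (le_lt_trans H Hm); rewrite card_arcs_in mulnC.
Qed.

Lemma card_set_ind (T : finType) (P : {set T} -> Prop) :
  (forall S : {set T}, (forall S' : {set T}, #|S'| < #|S| -> P S') -> P S) ->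
  forall S, P S.
Proof.
move=> H S; move: {2}#|S|.+1 (ltnSn #|S|) => n; elim: n S => [//|n IHn] S Sn.
by apply: H => S' S'S; apply: IHn; apply: leq_trans S'S _; rewrite -ltnS.
Qed.

Lemma forested_choice_number_le_of (T : finType) (e : rel T) k n :
  (forall L : T -> seq nat, (forall v, uniq (L v) /\ size (L v) = n) ->
     forall S : {set T}, (forall S' : {set T}, #|S'| < #|S| -> colorable e k L S') ->
     colorable e k L S) ->
  forested_choice_number_le e k n.
Proof.
move=> step; exists n => // L Lok.
have [c [cL cP cF]] := card_set_ind (step L Lok) setT.
exists c; split; last by move=> v; apply: cL; rewrite inE.
split; first by move=> u v; apply: cP; rewrite inE.
move=> a b ab; rewrite (_ : [set v | _] = bicolored setT c a b); first exact: cF.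
by apply/setP => v; rewrite !inE.
Qed.

Theorem theorem1p2 (M k : nat) (T : finType) (e : rel T) :
  4 <= k -> k <= M -> simple_graph e -> max_degree_le e M ->
  [/\ (mad e < 12%:R / 5%:R)%R ->
        forested_choice_number_le e k (ceil_div M k.-1 + 1),
      (mad e < 8%:R / 3%:R)%R ->
        forested_choice_number_le e k (ceil_div M k.-1 + 2) &
      (mad e < 3%:R)%R ->
        forested_choice_number_le e k (ceil_div M k.-1 + 3)].
Proof.
move=> k4 kM [esym eirr] maxdeg; split => mad_lt;
  apply: forested_choice_number_le_of => L Lok.
- exact: colorable_sparse_12_5 Lok erefl (sum_deg_lt_of_mad esym _ mad_lt).
- exact: colorable_sparse_8_3 Lok erefl (sum_deg_lt_of_mad esym _ mad_lt).
- rewrite -[(3%:R)%R]divr1 in mad_lt.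
  exact: colorable_sparse_3 Lok erefl (sum_deg_lt_of_mad (p := 3) (s := 1) esym _ mad_lt).
Qed.
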